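(* Let $n\ge2$, $F\in GL^+(n)$, $\mu>0$, $\mu_c\ge0$. (i) If $\mu=\mu_c$, then $R\in SO(n)$ is a critical point of $\widetilde W_{\mu,\mu_c}(\cdot;F)$ if and only if $FR^T=RF^T$. (ii) If $\mu\ne\mu_c$, then $R\in SO(n)$ is a critical point of $\widetilde W_{\mu,\mu_c}(\cdot;F)$ if and only if $R$ is a critical point of $\widetilde W_{1,0}(\cdot;\widehat F_{\mu,\mu_c})$, which holds if and only if $$\widehat F_{\mu,\mu_c}R^T\widehat F_{\mu,\mu_c}R^T-R\widehat F_{\mu,\mu_c}^TR\widehat F_{\mu,\mu_c}^T=2\big(\widehat F_{\mu,\mu_c}R^T-R\widehat F_{\mu,\mu_c}^T\big).$$
   Context: $\mathrm{sym}(Y)=\tfrac12(Y+Y^T)$, $\mathrm{skew}(Y)=\tfrac12(Y-Y^T)$, $\|Y\|^2=\mathrm{tr}(Y^TY)$. For $F\in GL^+(n)$, $\mu>0$, $\mu_c\ge0$: $\widetilde W_{\mu,\mu_c}(R;F)=\mu\|\mathrm{sym}(R^TF-\mathbb I_n)\|^2+\mu_c\|\mathrm{skew}(R^TF-\mathbb I_n)\|^2$ on $SO(n)$; for any invertible $G$, $\widetilde W_{1,0}(R;G)=\|\mathrm{sym}(R^TG-\mathbb I_n)\|^2$. $\widehat F_{\mu,\mu_c}=\frac{\mu-\mu_c}{\mu}F$. Critical points are those of the restriction to the submanifold $SO(n)\subset\mathcal M_{n\times n}(\mathbb R)$. *)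

From HB Require Import structures.
From mathcomp Require Import all_boot all_order all_algebra.
Set Implicit Arguments. Unset Strict Implicit. Unset Printing Implicit Defensive.
Import Order.TTheory GRing.Theory Num.Theory.
Local Open Scope ring_scope.

Section Defs.
Variables (R : realFieldType) (n : nat).

Definition msym (Y : 'M[R]_n) : 'M[R]_n := 2%:R^-1 *: (Y + Y^T).
Definition mskew (Y : 'M[R]_n) : 'M[R]_n := 2%:R^-1 *: (Y - Y^T).

Definition mxnorm2 (Y : 'M[R]_n) : R := \tr (Y^T *m Y).

Definition Wt (mu muc : R) (F : 'M[R]_n) (Rm : 'M[R]_n) : R :=
  mu * mxnorm2 (msym (Rm^T *m F - 1%:M)) + muc * mxnorm2 (mskew (Rm^T *m F - 1%:M)).

Definition Fhat (mu muc : R) (F : 'M[R]_n) : 'M[R]_n := ((mu - muc) / mu) *: F.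

Definition is_SO (Rm : 'M[R]_n) : Prop := Rm^T *m Rm = 1%:M /\ \det Rm = 1.
Definition is_GLplus (F : 'M[R]_n) : Prop := 0 < \det F.

Definition has_deriv (phi : R -> R) (t0 L : R) : Prop :=
  forall e, 0 < e -> exists2 d, 0 < d &
    forall t, 0 < `|t - t0| < d -> `|(phi t - phi t0) / (t - t0) - L| < e.

Definition mx_has_deriv (gamma : R -> 'M[R]_n) (t0 : R) (V : 'M[R]_n) : Prop :=
  forall i j, has_deriv (fun t => gamma t i j) t0 (V i j).

(* Rm is a critical point of the restriction of f to the submanifold SO(n):
   for every curve gamma with gamma(0) = Rm, lying in SO(n) near 0 and
   differentiable at 0, the derivative of f o gamma at 0 vanishes. *)
Definition critical_SO (f : 'M[R]_n -> R) (Rm : 'M[R]_n) : Prop :=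
  forall (gamma : R -> 'M[R]_n) (V : 'M[R]_n),
    gamma 0 = Rm ->
    (exists2 d, 0 < d & forall t, `|t| < d -> is_SO (gamma t)) ->
    mx_has_deriv gamma 0 V ->
    has_deriv (fun t => f (gamma t)) 0 0.

End Defs.

(* Writing [P = R^T F], the derivative of [Wt] along a curve in SO(n) through
   [R] with velocity [R A] ([A] skew, which is all tangent vectors) equals
   [tr(A N)] with [N = 2 mu P - (mu - muc) P^2].  Hence [R] is critical iff
   [N] is symmetric: sufficiency because skew matrices are trace-orthogonal to
   symmetric ones, necessity by testing along the curves [R H(t)^2], [H(t)]
   the rotation of a coordinate plane parametrized rationally by [t].
   The theorem then follows by algebra: for [mu = muc], [N = 2 mu P]; for
   [mu <> muc], [N] is a nonzero multiple of the matrix [N] of [Wt 1 0 Fhat],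
   whose symmetry, conjugated by [R], is the stated quadratic identity. *)
From HB Require Import structures.
From mathcomp Require Import all_boot all_order all_algebra.
From mathcomp Require Import boolp functions topology normedtype derive.
From mathcomp Require Import ring lra.
Import Order.TTheory GRing.Theory Num.Theory numFieldNormedType.Exports.
Local Open Scope ring_scope.
Local Open Scope classical_set_scope.

Set Implicit Arguments.
Unset Strict Implicit.
Unset Printing Implicit Defensive.

Section ScalarDerivative.
Variable R : realFieldType.
Implicit Types (phi psi : R -> R).

Lemma near_dnbhs0P (P : R -> Prop) :
  (\forall h \near (0 : R)^', P h) <->
  exists2 d, 0 < d & forall h, 0 < `|h| < d -> P h.
Proof.
rewrite near_withinE; split=> [/nbhs_ballP[d d0 Pd]|[d d0 Pd]].
  exists d => // h /andP[h0 hd]; apply: Pd; last by rewrite -normr_gt0.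
  by rewrite /ball /= sub0r normrN.
apply/nbhs_ballP; exists d => // h; rewrite /ball /= sub0r normrN => hd h0.
by apply: Pd; rewrite normr_gt0 h0.
Qed.

(* The epsilon-delta derivative [has_deriv] is the library's [is_derive]
   in direction 1; all the differentiation rules below are imported this way. *)
Lemma has_derivP phi t0 a : has_deriv phi t0 a <-> is_derive t0 1 phi a.
Proof.
have -> : is_derive t0 1 phi a <->
    (fun h => h^-1 *: (phi (h *: 1 + t0) - phi t0)) @ 0^' --> a.
  split=> [[dphi <-] //|cvg_a]; split; [exact: cvgP cvg_a|exact: cvg_lim cvg_a].
rewrite cvgrPdist_lt; split=> [dphi e e0|cvg_a e e0].
  apply/near_dnbhs0P; have [d d0 dphi_e] := dphi e e0; exists d => // h hd.
  have := dphi_e (h + t0); rewrite addrK distrC [_%:A]mulr1 [_ *: _]mulrC.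
  exact.
have /near_dnbhs0P[d d0 cvg_e] := cvg_a e e0; exists d => // t td.
by have := cvg_e _ td; rewrite distrC [_%:A]mulr1 subrK [_ *: _]mulrC.
Qed.

Lemma has_deriv_unique phi t0 a b :
  has_deriv phi t0 a -> has_deriv phi t0 b -> a = b.
Proof.
by move=> /has_derivP da /has_derivP db; rewrite -(@derive_val _ _ _ _ _ _ _ da) derive_val.
Qed.

Lemma has_deriv_cst (t0 c : R) : has_deriv (fun=> c) t0 0.
Proof. by apply/has_derivP; exact: is_derive_cst. Qed.

Lemma has_deriv_locally_cst phi t0 d : 0 < d ->
  (forall t, `|t - t0| < d -> phi t = phi t0) -> has_deriv phi t0 0.
Proof.
move=> d0 phi_cst e e0; exists d => // t /andP[_ td].
by rewrite phi_cst // subrr mul0r subrr normr0.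
Qed.

Lemma has_deriv_add phi psi t0 a b : has_deriv phi t0 a -> has_deriv psi t0 b ->
  has_deriv (fun t => phi t + psi t) t0 (a + b).
Proof. by move=> /has_derivP da /has_derivP db; apply/has_derivP; exact: is_deriveD. Qed.

Lemma has_deriv_mul phi psi t0 a b : has_deriv phi t0 a -> has_deriv psi t0 b ->
  has_deriv (fun t => phi t * psi t) t0 (a * psi t0 + phi t0 * b).
Proof.
move=> /has_derivP da /has_derivP db; apply/has_derivP.
by apply: is_derive_eq (is_deriveM da db) _; rewrite /GRing.scale /= addrC mulrC.
Qed.

Lemma has_deriv_scale (c : R) phi t0 a : has_deriv phi t0 a ->
  has_deriv (fun t => c * phi t) t0 (c * a).
Proof.
by move=> da; have := has_deriv_mul (has_deriv_cst t0 c) da; rewrite mul0r add0r.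
Qed.

Lemma has_deriv_id (t0 : R) : has_deriv id t0 1.
Proof. by apply/has_derivP; exact: is_derive_id. Qed.

Lemma has_deriv_inv phi t0 a : has_deriv phi t0 a -> phi t0 != 0 ->
  has_deriv (fun t => (phi t)^-1) t0 (- a / phi t0 ^+ 2).
Proof.
move=> /has_derivP[dphi Dphi] phi0; apply/has_derivP; split.
  exact: derivableV.
by rewrite deriveV // Dphi /GRing.scale /= mulNr mulrC mulNr.
Qed.

Lemma has_deriv_sum n (phi : 'I_n -> R -> R) (a : 'I_n -> R) t0 :
  (forall i, has_deriv (phi i) t0 (a i)) ->
  has_deriv (fun t => \sum_i phi i t) t0 (\sum_i a i).
Proof.
move=> da; apply/has_derivP; rewrite -fct_sumE.
by apply: is_derive_sum => i; apply/has_derivP.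
Qed.
End ScalarDerivative.

Section MatrixDerivative.
Variables (R : realFieldType) (n : nat).
Implicit Types (A B : R -> 'M[R]_n) (M V W : 'M[R]_n).

Lemma mx_deriv_cst M (t0 : R) : mx_has_deriv (fun=> M) t0 0.
Proof. by move=> i j; rewrite mxE; exact: has_deriv_cst. Qed.

Lemma mx_deriv_add A B t0 V W : mx_has_deriv A t0 V -> mx_has_deriv B t0 W ->
  mx_has_deriv (fun t => A t + B t) t0 (V + W).
Proof.
move=> dA dB i j; rewrite mxE.
by under eq_fun do rewrite mxE; exact: has_deriv_add.
Qed.

Lemma mx_deriv_scale (phi : R -> R) M t0 a : has_deriv phi t0 a ->
  mx_has_deriv (fun t => phi t *: M) t0 (a *: M).
Proof.
move=> da i j; rewrite mxE.
under eq_fun do rewrite mxE.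
by have := has_deriv_mul da (has_deriv_cst t0 (M i j)); rewrite mulr0 addr0.
Qed.

Lemma mx_deriv_tr A t0 V : mx_has_deriv A t0 V ->
  mx_has_deriv (fun t => (A t)^T) t0 V^T.
Proof. by move=> dA i j; rewrite mxE; under eq_fun do rewrite mxE; exact: dA. Qed.

Lemma mx_deriv_mul A B t0 V W : mx_has_deriv A t0 V -> mx_has_deriv B t0 W ->
  mx_has_deriv (fun t => A t *m B t) t0 (V *m B t0 + A t0 *m W).
Proof.
move=> dA dB i j; rewrite !mxE -big_split /=.
under eq_fun do rewrite mxE.
by apply: has_deriv_sum => k; exact: has_deriv_mul.
Qed.

Lemma deriv_trace A t0 V : mx_has_deriv A t0 V ->
  has_deriv (fun t => \tr (A t)) t0 (\tr V).
Proof. by move=> dA; apply: has_deriv_sum => i; exact: dA. Qed.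

End MatrixDerivative.

Section Energy.
Variables (R : realFieldType) (n : nat).
Implicit Types (X Y A S F Rm V : 'M[R]_n) (mu muc : R).

Lemma mxtrace_trTT Y : \tr (Y^T *m Y^T) = \tr (Y *m Y).
Proof. by rewrite -trmx_mul mxtrace_tr. Qed.

Lemma mxtrace_mulT X Y : \tr (X^T *m Y) = \tr (Y^T *m X).
Proof. by rewrite -mxtrace_tr trmx_mul trmxK. Qed.

Lemma mxnorm2_sym Y : mxnorm2 (msym Y) = 2^-1 * (\tr (Y^T *m Y) + \tr (Y *m Y)).
Proof.
rewrite /mxnorm2 /msym [(_ *: _)^T]linearZ /= [(_ + _)^T]linearD /= trmxK -scalemxAl -scalemxAr.
rewrite !mxtraceZ mulmxDl !mulmxDr !mxtraceD mxtrace_trTT (mxtrace_mulC Y Y^T).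
by field.
Qed.

Lemma mxnorm2_skew Y : mxnorm2 (mskew Y) = 2^-1 * (\tr (Y^T *m Y) - \tr (Y *m Y)).
Proof.
rewrite /mxnorm2 /mskew [(_ *: _)^T]linearZ /= [(_ - _)^T]linearB /= trmxK -scalemxAl -scalemxAr.
rewrite !mxtraceZ mulmxBl !mulmxBr !raddfB /= mxtrace_trTT (mxtrace_mulC Y Y^T).
by field.
Qed.

Lemma Wt_trace_form mu muc F Rm : let Y := Rm^T *m F - 1%:M in
  Wt mu muc F Rm = (mu + muc) / 2 * \tr (Y^T *m Y) + (mu - muc) / 2 * \tr (Y *m Y).
Proof. by rewrite /Wt mxnorm2_sym mxnorm2_skew; ring. Qed.

Definition Wt_variation mu muc F Rm V : R :=
  (mu + muc) * \tr ((V^T *m F)^T *m (Rm^T *m F - 1%:M))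
  + (mu - muc) * \tr ((V^T *m F) *m (Rm^T *m F - 1%:M)).

Lemma deriv_Wt mu muc F (gamma : R -> 'M[R]_n) t0 V : mx_has_deriv gamma t0 V ->
  has_deriv (fun t => Wt mu muc F (gamma t)) t0 (Wt_variation mu muc F (gamma t0) V).
Proof.
move=> dgamma; set Y := fun t => (gamma t)^T *m F - 1%:M.
have dY : mx_has_deriv Y t0 (V^T *m F).
  have := mx_deriv_add (mx_deriv_mul (mx_deriv_tr dgamma) (mx_deriv_cst F t0))
                       (mx_deriv_cst (- 1%:M) t0).
  by rewrite mulmx0 !addr0.
have dYTY := deriv_trace (mx_deriv_mul (mx_deriv_tr dY) dY).
have dYY := deriv_trace (mx_deriv_mul dY dY).
have := has_deriv_add (has_deriv_scale ((mu + muc) / 2) dYTY)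
                      (has_deriv_scale ((mu - muc) / 2) dYY).
under eq_fun do rewrite -Wt_trace_form.
suff -> : Wt_variation mu muc F (gamma t0) V =
    (mu + muc) / 2 * \tr ((V^T *m F)^T *m Y t0 + (Y t0)^T *m (V^T *m F))
    + (mu - muc) / 2 * \tr (V^T *m F *m Y t0 + Y t0 *m (V^T *m F)) by [].
rewrite !mxtraceD [\tr ((Y t0)^T *m _)]mxtrace_mulT [\tr (Y t0 *m _)]mxtrace_mulC.
by rewrite /Wt_variation /Y; field.
Qed.

Lemma mxtrace_skew_sym A S : A^T = - A -> S^T = S -> \tr (A *m S) = 0.
Proof.
move=> skewA symS; have : \tr (A *m S) = - \tr (A *m S).
  by rewrite -{1}mxtrace_tr trmx_mul skewA symS mulmxN raddfN /= mxtrace_mulC.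
lra.
Qed.

(* The matrix [2 mu P - (mu - muc) P^2], [P = Rm^T F], which represents the
   first variation of the energy along the tangent directions [Rm A] of SO(n). *)
Definition variation_mx mu muc F Rm : 'M[R]_n :=
  (2 * mu) *: (Rm^T *m F) - (mu - muc) *: (Rm^T *m F *m (Rm^T *m F)).

Lemma Wt_variation_skew mu muc F Rm A : A^T = - A ->
  Wt_variation mu muc F Rm (Rm *m A) = \tr (A *m variation_mx mu muc F Rm).
Proof.
move=> skewA; rewrite /Wt_variation /variation_mx.
have -> : (Rm *m A)^T *m F = - (A *m (Rm^T *m F)).
  by rewrite trmx_mul skewA !mulNmx -mulmxA.
move: (Rm^T *m F) => P.
have trPTA : \tr (P^T *m A) = - \tr (A *m P).
  by rewrite mxtrace_mulT skewA mulNmx raddfN.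
have trPTAP : \tr (P^T *m A *m P) = 0.
  by rewrite mxtrace_mulC mulmxA mxtrace_mulC mxtrace_skew_sym // trmx_mul trmxK.
rewrite linearN /= trmx_mul skewA mulmxN opprK !mulNmx !mulmxBr !mulmx1.
rewrite !raddfB /= !raddfN /= trPTA trPTAP -!scalemxAr !mxtraceZ mulmxA.
ring.
Qed.
End Energy.

(* Rational parametrization [(1 + x, y)] of the unit circle,
   [x = cos - 1 = -2t^2/(1+t^2)], [y = sin = 2t/(1+t^2)]. *)
Section RationalCircle.
Variable R : realFieldType.

Definition circ_x (t : R) : R := -2 * (t * t) / (1 + t * t).
Definition circ_y (t : R) : R := (2 * t) / (1 + t * t).

Lemma circ_den_neq0 (t : R) : 1 + t * t != 0.
Proof. by rewrite gt_eqF //; nra. Qed.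

Lemma circ_eq (t : R) : 2 * circ_x t + circ_x t * circ_x t + circ_y t * circ_y t = 0.
Proof. by rewrite /circ_x /circ_y; field; exact: circ_den_neq0. Qed.

Lemma circ_x0 : circ_x 0 = 0.
Proof. by rewrite /circ_x !(mulr0, mul0r). Qed.

Lemma circ_y0 : circ_y 0 = 0.
Proof. by rewrite /circ_y !(mulr0, mul0r). Qed.

Lemma has_deriv_circ_den_inv : has_deriv (fun t : R => (1 + t * t)^-1) 0 0.
Proof.
have := has_deriv_inv
  (has_deriv_add (has_deriv_cst 0 1) (has_deriv_mul (has_deriv_id 0) (has_deriv_id 0)))
  (circ_den_neq0 0).
by rewrite !(mulr0, mul0r, addr0, add0r, oppr0).
Qed.

Lemma has_deriv_circ_x : has_deriv circ_x 0 0.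
Proof.
have := has_deriv_mul (has_deriv_scale (-2) (has_deriv_mul (has_deriv_id 0) (has_deriv_id 0)))
                      has_deriv_circ_den_inv.
by rewrite !(mulr0, mul0r, addr0, add0r).
Qed.

Lemma has_deriv_circ_y : has_deriv circ_y 0 2.
Proof.
have := has_deriv_mul (has_deriv_scale 2 (has_deriv_id 0)) has_deriv_circ_den_inv.
by rewrite !(mulr0, mul0r, addr0, mulr1, invr1).
Qed.
End RationalCircle.

(* Rotations in the coordinate plane [(i, j)]:
   [plane_rot x y = 1 + x (e_ii + e_jj) + y (e_ij - e_ji)], a rotation by the
   angle theta exactly when [(1 + x, y) = (cos theta, sin theta)]. *)
Section PlaneRotation.
Variables (R : realFieldType) (n : nat) (i j : 'I_n).

Definition plane_gen : 'M[R]_n := delta_mx i j - delta_mx j i.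
Definition plane_rot (x y : R) : 'M[R]_n :=
  1%:M + x *: (delta_mx i i + delta_mx j j) + y *: plane_gen.

Lemma plane_gen_skew : plane_gen^T = - plane_gen.
Proof. by rewrite /plane_gen linearB /= !trmx_delta opprB. Qed.

Lemma plane_rot00 : plane_rot 0 0 = 1%:M.
Proof. by rewrite /plane_rot !scale0r !addr0. Qed.

Lemma plane_rot_tr x y : (plane_rot x y)^T = plane_rot x (- y).
Proof.
rewrite /plane_rot /plane_gen !linearD /= !linearZ /= linearN /= tr_scalar_mx.
by rewrite !trmx_delta; congr (_ + _); rewrite !scaleNr !scalerN opprK addrC.
Qed.

Hypothesis neq_ij : i != j.

Lemma plane_rotM x1 y1 x2 y2 : plane_rot x1 y1 *m plane_rot x2 y2 =
  plane_rot (x1 + x2 + x1 * x2 - y1 * y2) (y1 + y2 + x1 * y2 + y1 * x2).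
Proof.
have neq_ji : j != i by rewrite eq_sym.
rewrite /plane_rot /plane_gen !mulmxDl !mulmxDr -!scalemxAl -!scalemxAr !mul1mx !mulmx1.
rewrite !mulmxDl !mulmxDr ?mulmxBl ?mulmxBr ?mulmxN ?mulNmx !mul_delta_mx !mul_delta_mx_0 //.
by apply/matrixP => k l; rewrite !mxE; ring.
Qed.

Lemma plane_rot_orth x y : 2 * x + x * x + y * y = 0 ->
  (plane_rot x y)^T *m plane_rot x y = 1%:M.
Proof.
move=> circ; rewrite plane_rot_tr plane_rotM -plane_rot00; congr plane_rot.
  by rewrite -circ; ring.
by ring.
Qed.

End PlaneRotation.
Arguments plane_gen {R n}.
Arguments plane_rot {R n}.

Section Criticality.
Variables (R : realFieldType) (n : nat).
Implicit Types (A N F Rm : 'M[R]_n) (mu muc : R).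

Lemma mxtrace_delta_mul (i j : 'I_n) N : \tr (delta_mx i j *m N) = N j i.
Proof.
rewrite /mxtrace (bigD1 i) //= [X in _ + X]big1 ?addr0 => [|k neq_ki].
  rewrite mxE (bigD1 j) //= big1 ?addr0 => [|l neq_lj]; first by rewrite mxE !eqxx mul1r.
  by rewrite mxE eqxx (negbTE neq_lj) mul0r.
by rewrite mxE big1 // => l _; rewrite mxE (negbTE neq_ki) mul0r.
Qed.

Lemma sym_of_plane_gen N :
  (forall i j : 'I_n, i != j -> \tr (plane_gen i j *m N) = 0) -> N^T = N.
Proof.
move=> orthN; apply/matrixP => i j; rewrite mxE.
have [-> //|neq_ij] := eqVneq i j.
move: (orthN i j neq_ij); rewrite /plane_gen mulmxBl raddfB /= !mxtrace_delta_mul.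
by move/eqP; rewrite subr_eq0 => /eqP.
Qed.

Lemma SO_mul A B : is_SO A -> is_SO B -> is_SO (A *m B).
Proof.
move=> [A_orth detA] [B_orth detB]; split; last by rewrite det_mulmx detA detB mulr1.
by rewrite trmx_mul mulmxA -(mulmxA B^T) A_orth mulmx1 B_orth.
Qed.

(* The square of an orthogonal matrix is a rotation: its determinant is
   [det(H)^2 = det(H^T H) = 1]. *)
Lemma orth_sqr_SO A : A^T *m A = 1%:M -> is_SO (A *m A).
Proof.
move=> A_orth; split; first by rewrite trmx_mul mulmxA -(mulmxA A^T) A_orth mulmx1.
by rewrite det_mulmx -{1}det_tr -det_mulmx A_orth det1.
Qed.

(* Tangent vectors to SO(n) at [Rm] are of the form [Rm A] with [A] skew:
   differentiate [gamma^T gamma = 1]. *)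
Lemma SO_tangent_skew (gamma : R -> 'M[R]_n) Rm V : gamma 0 = Rm ->
  (exists2 d, 0 < d & forall t, `|t| < d -> is_SO (gamma t)) ->
  mx_has_deriv gamma 0 V -> (Rm^T *m V)^T = - (Rm^T *m V).
Proof.
move=> gamma0 [d d0 gammaSO] dgamma.
have orth t : `|t| < d -> (gamma t)^T *m gamma t = 1%:M by case/gammaSO.
have orth_deriv : V^T *m Rm + Rm^T *m V = 0.
  apply/matrixP => k l; rewrite [RHS]mxE.
  have := mx_deriv_mul (mx_deriv_tr dgamma) dgamma k l; rewrite gamma0 mxE.
  move/has_deriv_unique; apply; apply: (has_deriv_locally_cst d0) => t.
  by rewrite subr0 => /orth ->; rewrite orth // normr0.
by rewrite trmx_mul trmxK; apply/eqP; rewrite -addr_eq0 orth_deriv.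
Qed.

(* Test curves: [t |-> Rm H(t)^2] where [H(t)] is the rotation of the plane
   [(i, j)] rationally parametrized by [t]; the square makes the determinant 1. *)
Definition plane_curve (i j : 'I_n) Rm (t : R) : 'M[R]_n :=
  let H := plane_rot i j (circ_x t) (circ_y t) in Rm *m (H *m H).

Lemma plane_curve0 (i j : 'I_n) Rm : plane_curve i j Rm 0 = Rm.
Proof. by rewrite /plane_curve circ_x0 circ_y0 plane_rot00 mulmx1 mulmx1. Qed.

Lemma plane_curve_SO (i j : 'I_n) Rm t : i != j -> is_SO Rm ->
  is_SO (plane_curve i j Rm t).
Proof.
move=> neq_ij SO_Rm; apply: SO_mul SO_Rm _; apply: orth_sqr_SO.
exact/plane_rot_orth/circ_eq.
Qed.

Lemma plane_curve_deriv (i j : 'I_n) Rm :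
  mx_has_deriv (plane_curve i j Rm) 0 (Rm *m (4 *: plane_gen i j)).
Proof.
have dH : mx_has_deriv (fun t : R => plane_rot i j (circ_x t) (circ_y t)) 0 (2 *: plane_gen i j).
  have := mx_deriv_add (mx_deriv_add (mx_deriv_cst 1%:M 0)
            (mx_deriv_scale (delta_mx i i + delta_mx j j) (@has_deriv_circ_x R)))
            (mx_deriv_scale (plane_gen i j) (@has_deriv_circ_y R)).
  by rewrite scale0r !add0r.
have := mx_deriv_mul (mx_deriv_cst Rm 0) (mx_deriv_mul dH dH).
rewrite circ_x0 circ_y0 plane_rot00 mulmx1 mul1mx mul0mx add0r mulmx1 -scalerDl.
by rewrite -natrD.
Qed.

(* Necessity: along the test curve of the plane [(i, j)] the first variation
   is [4 tr(J_ij N)], so criticality forces [N] to be symmetric. *)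
Lemma critical_variation_sym mu muc F Rm : is_SO Rm ->
  critical_SO (Wt mu muc F) Rm -> (variation_mx mu muc F Rm)^T = variation_mx mu muc F Rm.
Proof.
move=> SO_Rm crit; apply: sym_of_plane_gen => i j neq_ij.
have curveSO : exists2 d, 0 < d & forall t, `|t| < d -> is_SO (plane_curve i j Rm t).
  by exists 1 => // t _; exact: plane_curve_SO.
have dcurve := plane_curve_deriv i j Rm.
have := has_deriv_unique (deriv_Wt mu muc F dcurve)
                         (crit _ _ (plane_curve0 i j Rm) curveSO dcurve).
rewrite plane_curve0 Wt_variation_skew; last by rewrite linearZ /= plane_gen_skew scalerN.
by rewrite -scalemxAl mxtraceZ => /eqP; rewrite mulf_eq0 pnatr_eq0 => /eqP.
Qed.

(* Sufficiency: every tangent direction is [Rm A] with [A] skew, and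
   [tr(A N) = 0] for symmetric [N]. *)
Lemma variation_sym_critical mu muc F Rm : is_SO Rm ->
  (variation_mx mu muc F Rm)^T = variation_mx mu muc F Rm -> critical_SO (Wt mu muc F) Rm.
Proof.
move=> [RmTRm _] symN gamma V gamma0 gammaSO dgamma.
have skewA := SO_tangent_skew gamma0 gammaSO dgamma.
have eqV : V = Rm *m (Rm^T *m V) by rewrite mulmxA (mulmx1C RmTRm) mul1mx.
have := deriv_Wt mu muc F dgamma.
by rewrite gamma0 [in Wt_variation _ _ _ _ V]eqV Wt_variation_skew // mxtrace_skew_sym.
Qed.

Lemma critical_SO_Wt mu muc F Rm : is_SO Rm ->
  critical_SO (Wt mu muc F) Rm <-> (variation_mx mu muc F Rm)^T = variation_mx mu muc F Rm.
Proof.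
by move=> SO_Rm; split; [exact: critical_variation_sym|exact: variation_sym_critical].
Qed.
End Criticality.

Section Reduction.
Variables (R : realFieldType) (n : nat).
Implicit Types (X Y M F G Rm : 'M[R]_n) (mu muc : R).

Lemma sym_scale (c : R) M : c != 0 -> (c *: M)^T = c *: M <-> M^T = M.
Proof. by move=> c0; rewrite linearZ /=; split=> [/(scalerI c0)|->]. Qed.

Lemma orth_conj_inj Rm X Y : Rm^T *m Rm = 1%:M ->
  Rm *m X *m Rm^T = Rm *m Y *m Rm^T <-> X = Y.
Proof.
move=> RmTRm; split=> [|-> //] /(congr1 (fun M => Rm^T *m M *m Rm)).
by rewrite !mulmxA RmTRm !mul1mx -!mulmxA RmTRm !mulmx1.
Qed.

Lemma orth_sym_iff Rm F : Rm^T *m Rm = 1%:M ->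
  (Rm^T *m F)^T = Rm^T *m F <-> F *m Rm^T = Rm *m F^T.
Proof.
move=> RmTRm; have RmRmT := mulmx1C RmTRm.
rewrite -(orth_conj_inj _ _ RmTRm) trmx_mul trmxK !mulmxA RmRmT mul1mx.
by rewrite -(mulmxA _ Rm) RmRmT mulmx1; split=> /esym.
Qed.

Lemma variation_mx_Fhat mu muc F Rm : mu != 0 -> mu != muc ->
  variation_mx mu muc F Rm = (mu ^+ 2 / (mu - muc)) *: variation_mx 1 0 (Fhat mu muc F) Rm.
Proof.
move=> mu0 neq_mu; have mu_muc0 : mu - muc != 0 by rewrite subr_eq0.
rewrite /variation_mx /Fhat -!scalemxAr -?scalemxAl -?scalemxAr.
by apply/matrixP => k l; rewrite !mxE; field; rewrite mu0 mu_muc0.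
Qed.

Lemma variation_mx10_sym G Rm : Rm^T *m Rm = 1%:M ->
  (variation_mx 1 0 G Rm)^T = variation_mx 1 0 G Rm <->
  G *m Rm^T *m G *m Rm^T - Rm *m G^T *m Rm *m G^T = 2 *: (G *m Rm^T - Rm *m G^T).
Proof.
move=> RmTRm; have RmRmT := mulmx1C RmTRm.
have -> : G *m Rm^T *m G *m Rm^T - Rm *m G^T *m Rm *m G^T
    = Rm *m (Rm^T *m G *m (Rm^T *m G) - (Rm^T *m G)^T *m (Rm^T *m G)^T) *m Rm^T.
  rewrite trmx_mul trmxK mulmxBr mulmxBl !mulmxA RmRmT mul1mx.
  by rewrite -(mulmxA (Rm *m G^T *m Rm *m G^T)) RmRmT mulmx1.
have -> : 2 *: (G *m Rm^T - Rm *m G^T) = Rm *m (2 *: (Rm^T *m G - (Rm^T *m G)^T)) *m Rm^T.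
  rewrite trmx_mul trmxK -scalemxAr -scalemxAl mulmxBr mulmxBl !mulmxA RmRmT mul1mx.
  by rewrite -!(mulmxA _ Rm Rm^T) RmRmT !mulmx1.
rewrite orth_conj_inj // /variation_mx; move: (Rm^T *m G) => P.
rewrite linearB /= !linearZ /= trmx_mul.
split=> eqP_; apply/matrixP => k l; move/matrixP/(_ k l): eqP_; rewrite !mxE => eqP_; lra.
Qed.
End Reduction.

Theorem mainTheorem4 (R : realFieldType) (n : nat) (F : 'M[R]_n) (mu muc : R) :
  (2 <= n)%N -> is_GLplus F -> 0 < mu -> 0 <= muc ->
  (mu = muc ->
     forall Rm : 'M[R]_n, is_SO Rm ->
       (critical_SO (Wt mu muc F) Rm <-> F *m Rm^T = Rm *m F^T)) /\
  (mu <> muc ->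
     forall Rm : 'M[R]_n, is_SO Rm ->
       (critical_SO (Wt mu muc F) Rm <-> critical_SO (Wt 1 0 (Fhat mu muc F)) Rm) /\
       (critical_SO (Wt 1 0 (Fhat mu muc F)) Rm <->
          Fhat mu muc F *m Rm^T *m Fhat mu muc F *m Rm^T
            - Rm *m (Fhat mu muc F)^T *m Rm *m (Fhat mu muc F)^T
          = 2%:R *: (Fhat mu muc F *m Rm^T - Rm *m (Fhat mu muc F)^T))).
Proof.
move=> _ _ mu_gt0 _; have mu0 : mu != 0 by rewrite gt_eqF.
split=> [<- Rm SO_Rm | /eqP neq_mu Rm SO_Rm].
  (* [mu = muc]: the variation matrix is [2 mu Rm^T F]. *)
  rewrite critical_SO_Wt // /variation_mx subrr scale0r subr0 sym_scale.
    exact: orth_sym_iff SO_Rm.1.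
  by rewrite mulf_neq0 ?pnatr_eq0.
split; rewrite !critical_SO_Wt //; last exact: variation_mx10_sym SO_Rm.1.
rewrite variation_mx_Fhat // sym_scale //.
by rewrite mulf_neq0 ?expf_neq0 ?invr_eq0 ?subr_eq0.
Qed.
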